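(* Let $\nu$ be a probability density on $\mathsf{X}\subset\mathbb{R}^{d_{x}}$, for each $x\in\mathsf{X}$ let $f_{x}$ be a probability density on $\mathsf{Y}\subset\mathbb{R}^{d}$, fix $y\in\mathsf{Y}$ and $\epsilon>0$, and set $\ell_{\mathrm{ABC}}(x):=\mathbb{P}_{x}(|z-y|<\epsilon)$ for $z\sim f_{x}$, assumed positive for all $x$. Let $\pi(\mathrm{d}x)\propto\nu(x)\ell_{\mathrm{ABC}}(x)\mathrm{d}x$. For $N\in\mathbb{N}$ and $x\in\mathsf{X}$, let $z_{1},\dots,z_{N}\overset{\mathrm{iid}}{\sim}f_{x}$, $W_{j}:=1/\ell_{\mathrm{ABC}}(x)$ if $|z_{j}-y|<\epsilon$ and $W_{j}:=0$ otherwise, $\mathcal{W}_{N}:=\frac{1}{N}\sum_{j=1}^{N}W_{j}$, let $Q_{x}$ be the law of $\mathcal{W}_{N}$ and $\tilde{\pi}_{x}(\mathrm{d}w):=wQ_{x}(\mathrm{d}w)$. Let $p\in\mathbb{N}$ and suppose $\int_{\mathsf{X}}\nu(x)\ell_{\mathrm{ABC}}^{-(p-1)}(x)\,\mathrm{d}x<\infty$. Then there is $C_{N,p}>0$ such that for all $s>0$, \[ \int_{\mathsf{X}}\pi(\mathrm{d}x)\,\tilde{\pi}_{x}(\mathcal{W}_{N}\ge s)\le C_{N,p}\,s^{-p}, \] and $C_{N,p}=1+O(1/N)$ as $N\to\infty$. In particular, the hypothesis holds for $p=1$.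
   Context: $|\cdot|$ is the Euclidean norm. Under $Q_{x}$, $\mathcal{W}_{N}$ has mean $1$, and $\ell_{\mathrm{ABC}}(x)\sum_{j}W_{j}\sim\mathrm{Bin}(N,\ell_{\mathrm{ABC}}(x))$. *)

From HB Require Import structures.
From mathcomp Require Import all_boot all_order all_algebra.
From mathcomp Require Import all_classical all_reals all_analysis.
Set Implicit Arguments. Unset Strict Implicit. Unset Printing Implicit Defensive.
Import Order.TTheory GRing.Theory Num.Theory.
Local Open Scope ring_scope.

(* ABC likelihood: ell_ABC(x) = P_x(z in B), with B = {z | |z - y| < eps},
   z ~ f_x where f is the probability kernel x |-> law of z. *)
Definition ellABC (R : realType) (d d' : measure_display)
  (X : measurableType d) (Y : measurableType d') (f : R.-pker X ~> Y)
  (B : set Y) (x : X) : R := fine (f x B).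

(* The indicators b_j = 1{|z_j - y| < eps}, j < N, for z_1..z_N iid ~ f_x,
   are iid Bernoulli(l); this is their joint law on {0,1}^N. *)
Definition indic_law (R : realType) (N : nat) (l : R)
  (b : {ffun 'I_N -> bool}) : R :=
  \prod_(j < N) (if b j then l else 1 - l).

Definition WN (R : realType) (N : nat) (l : R) (b : {ffun 'I_N -> bool}) : R :=
  N%:R^-1 * \sum_(j < N) (if b j then l^-1 else 0).

(* tilde_pi_x(W_N >= s) = int w 1{w >= s} Q_x(dw) = E[W_N 1{W_N >= s}],
   Q_x being the law of W_N when the likelihood is l = ell_ABC(x). *)
Definition tilde_pi_tail (R : realType) (N : nat) (l s : R) : R :=
  \sum_(b : {ffun 'I_N -> bool})
     indic_law l b * (WN l b * (if s <= WN l b then 1 else 0)).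

Definition normconst (R : realType) (d : measure_display) (X : measurableType d)
  (mu : {measure set X -> \bar R}) (nu ell : X -> R) : R :=
  fine (\int[mu]_x (nu x * ell x)%:E)%E.

Definition pi_integral (R : realType) (d : measure_display) (X : measurableType d)
  (mu : {measure set X -> \bar R}) (nu ell : X -> R) (g : X -> R) : \bar R :=
  (\int[mu]_x ((nu x * ell x / normconst mu nu ell) * g x)%:E)%E.

From HB Require Import structures.
From mathcomp Require Import all_boot all_order all_algebra.
From mathcomp Require Import all_classical all_reals all_analysis.
From mathcomp Require Import zify ring measurable_realfun.
Import Order.TTheory GRing.Theory Num.Theory.
Local Open Scope ring_scope.

(* Fix x and write l := ell_ABC(x), so that N l W_N = S is Binomial(N, l).
   Since w 1{w >= s} <= w^(p+1) / s^p, the tail tilde_pi_x(W_N >= s) is at most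
   s^-p E[W_N^(p+1)] = s^-p E[S^(p+1)] / (N l)^(p+1).  Expanding S^(p+1) as a sum
   over the maps g : [p+1] -> [N] of products of indicators, the term of g has
   expectation l^|im g|: the injective maps contribute at most (N l)^(p+1), and
   each of the at most C(p+1, 2) N^p non-injective ones at most l.  Hence the
   tail is at most s^-p (1 + C(p+1, 2) / (N l^p)), and integrating against
   pi(dx) = nu(x) l(x) dx / Z gives C_{N,p} = 1 + C(p+1, 2) / (N Z)
   * int nu l^-(p-1), which is finite by hypothesis. *)

Lemma ffact_leq_expn (N m : nat) : (N ^_ m <= N ^ m)%N.
Proof.
elim: m => [|m IH]; first by rewrite ffactn0 expn0.
by rewrite ffactnSr expnS mulnC leq_mul // leq_subr.
Qed.

Lemma expn_leq_ffact_bin2 (N m : nat) :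
  (N ^ m <= N ^_ m + 'C(m, 2) * N ^ m.-1)%N.
Proof.
elim: m => [|m IH]; first by rewrite ffactn0 expn0 bin0n.
rewrite ffactnSr expnS binS bin1 /=.
have le_ffact := ffact_leq_expn N m.
have le_bin : ('C(m, 2) * N ^ m.-1 * N <= 'C(m, 2) * N ^ m)%N.
  case: m {IH le_ffact} => [|m]; first by rewrite bin0n.
  by rewrite /= -mulnA -expnSr.
have le_N : (N <= (N - m) + m)%N by lia.
have := leq_mul (leqnn N) IH; rewrite mulnDr.
move: le_ffact le_bin; set a := (N ^ m)%N; set b := (N ^_ m)%N.
set c := 'C(m, 2); set e := (N ^ m.-1)%N.
nia.
Qed.

Lemma card_noninjective_ffun (m N : nat) :
  (#|[pred g : {ffun 'I_m -> 'I_N} | ~~ injectiveb g]| <= 'C(m, 2) * N ^ m.-1)%N.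
Proof.
have card_inj : #|[pred g : {ffun 'I_m -> 'I_N} | injectiveb g]| = N ^_ m.
  have := card_inj_ffuns 'I_m 'I_N; rewrite !card_ord => <-.
  by apply: eq_card => g; rewrite !inE.
have := cardC [pred g : {ffun 'I_m -> 'I_N} | injectiveb g].
rewrite card_ffun !card_ord card_inj => card_all.
have := expn_leq_ffact_bin2 N m; rewrite -card_all leq_add2l.
by apply: leq_trans; apply: eq_leq; apply: eq_card => g; rewrite !inE.
Qed.

Lemma exprn_sum_ffun (R : comPzSemiRingType) (N m : nat) (c : 'I_N -> R) :
  (\sum_j c j) ^+ m = \sum_(g : {ffun 'I_m -> 'I_N}) \prod_i c (g i).
Proof.
by rewrite -(bigA_distr_bigA (fun (i : 'I_m) j => c j)) prodr_const card_ord.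
Qed.

Lemma prod_nat_bool (R : comPzSemiRingType) (I : finType) (P : pred I) :
  \prod_(i : I) ((P i)%:R : R) = [forall i, P i]%:R.
Proof.
case: forallP => [PI|/existsNP [i /negP Pi]]; first by apply: big1 => i _; rewrite PI.
by rewrite (bigD1 i) //= (negbTE Pi) mul0r.
Qed.

Section bernoulli_moments.
Variables (R : realType) (N : nat) (l : R).

Lemma sum_indic_law_prod (F : 'I_N -> bool -> R) :
  \sum_(b : {ffun 'I_N -> bool}) indic_law l b * \prod_j F j (b j)
  = \prod_j (l * F j true + (1 - l) * F j false).
Proof.
rewrite (eq_bigr (fun b : {ffun 'I_N -> bool} =>
  \prod_j ((if b j then l else 1 - l) * F j (b j)))); last first.
  by move=> b _; rewrite big_split.
rewrite -(bigA_distr_bigA (fun j (v : bool) => (if v then l else 1 - l) * F j v)).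
by apply: eq_bigr => j _; rewrite big_bool.
Qed.

Lemma indic_law_mixed_moment (m : nat) (g : {ffun 'I_m -> 'I_N}) :
  \sum_(b : {ffun 'I_N -> bool}) indic_law l b * \prod_i ((b (g i))%:R : R)
  = l ^+ #|codom g|.
Proof.
have prod_codom (b : {ffun 'I_N -> bool}) : \prod_i ((b (g i))%:R : R)
    = \prod_j (if j \in codom g then ((b j)%:R : R) else 1).
  rewrite prod_nat_bool (eq_bigr (fun j => ((j \in codom g) ==> b j)%:R)).
    rewrite prod_nat_bool; congr (_ *+ nat_of_bool _); apply/forallP/forallP => bg j.
      by apply/implyP => /codomP [i ->].
    by move/implyP: (bg (g j)); apply; exact: codom_f.
  by move=> j _; case: (j \in codom g).
under eq_bigr do rewrite prod_codom.
rewrite (sum_indic_law_prod (fun j v => if j \in codom g then v%:R else 1)).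
rewrite (eq_bigr (fun j => if j \in codom g then l else 1)); last first.
  by move=> j _; case: (j \in codom g); rewrite /= ?mulr1 ?mulr0 ?addr0 // addrC subrK.
by rewrite -big_mkcond prodr_const.
Qed.

Hypotheses (l_ge0 : 0 <= l) (l_le1 : l <= 1).

Lemma mixed_moment_le (m : nat) (g : {ffun 'I_m.+1 -> 'I_N}) :
  l ^+ #|codom g| <= l ^+ m.+1 + (~~ injectiveb g)%:R * l.
Proof.
case: injectiveP => [g_inj|_]; first by rewrite card_codom // card_ord mul0r addr0.
rewrite mul1r (@le_trans _ _ l) ?lerDr ?exprn_ge0 //.
rewrite -[leRHS]expr1 ler_wiXn2l //.
by apply/card_gt0P; exists (g ord0); exact: codom_f.
Qed.

Lemma binomial_moment_le (m : nat) :
  \sum_(b : {ffun 'I_N -> bool}) indic_law l b * (\sum_j ((b j)%:R : R)) ^+ m.+1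
  <= (N%:R * l) ^+ m.+1 + ('C(m.+1, 2) * N ^ m)%:R * l.
Proof.
under eq_bigr do rewrite exprn_sum_ffun mulr_sumr.
rewrite exchange_big /=.
under eq_bigr do rewrite indic_law_mixed_moment.
apply: (@le_trans _ _
  (\sum_(g : {ffun 'I_m.+1 -> 'I_N}) (l ^+ m.+1 + (~~ injectiveb g)%:R * l))).
  by apply: ler_sum => g _; exact: mixed_moment_le.
rewrite big_split /= sumr_const card_ffun !card_ord exprMn -natrX mulr_natl lerD2l.
rewrite -mulr_suml ler_wpM2r // -natr_sum ler_nat.
apply: leq_trans (card_noninjective_ffun m.+1 N); rewrite -sum1_card [in leqRHS]big_mkcond.
by apply: eq_leq; apply: eq_bigr => g _; rewrite inE; case: injectiveb.
Qed.

End bernoulli_moments.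

Lemma mulr_indicator_ge_le (R : realFieldType) (p : nat) (w s : R) :
  0 <= w -> 0 < s -> w * (if s <= w then 1 else 0) <= w ^+ p.+1 / s ^+ p.
Proof.
move=> w_ge0 s_gt0; case: ifP => [le_sw|_]; last first.
  by rewrite mulr0 divr_ge0 // exprn_ge0 // ltW.
rewrite mulr1 exprS -mulrA -expr_div_n -[leLHS]mulr1 ler_wpM2l // exprn_ege1 //.
by rewrite ler_pdivlMr // mul1r.
Qed.

Section tilde_pi_tail.
Variables (R : realType) (N : nat) (l : R).
Hypotheses (l_gt0 : 0 < l) (l_le1 : l <= 1).

Let l_ge0 : 0 <= l. Proof. exact: ltW. Qed.

Lemma indic_law_ge0 (b : {ffun 'I_N -> bool}) : 0 <= indic_law l b.
Proof. by apply: prodr_ge0 => j _; case: (b j); rewrite ?subr_ge0. Qed.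

Lemma WN_sum_div (b : {ffun 'I_N -> bool}) :
  WN l b = (\sum_j ((b j)%:R : R)) / (N%:R * l).
Proof.
rewrite /WN invfM mulrCA mulr_suml; congr (_ * _).
by apply: eq_bigr => j _; case: (b j); rewrite ?mul1r ?mul0r.
Qed.

Lemma WN_ge0 (b : {ffun 'I_N -> bool}) : 0 <= WN l b.
Proof.
rewrite WN_sum_div divr_ge0 ?mulr_ge0 //.
by apply: sumr_ge0 => j _; rewrite ler0n.
Qed.

Lemma tilde_pi_tail_ge0 (s : R) : 0 <= tilde_pi_tail N l s.
Proof.
apply: sumr_ge0 => b _; rewrite mulr_ge0 ?indic_law_ge0 // mulr_ge0 ?WN_ge0 //.
by case: ifP.
Qed.

Lemma tilde_pi_tail_le (p : nat) (s : R) : (0 < N)%N -> 0 < s ->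
  tilde_pi_tail N l s <= s ^- p * (1 + 'C(p.+1, 2)%:R / (N%:R * l ^+ p)).
Proof.
move=> N_gt0 s_gt0.
have N_neq0 : N%:R != 0 :> R by rewrite pnatr_eq0 -lt0n.
have [l_neq0 s_neq0] : l != 0 /\ s != 0 by rewrite !gt_eqF.
apply: (@le_trans _ _ (\sum_(b : {ffun 'I_N -> bool})
    indic_law l b * (WN l b ^+ p.+1 / s ^+ p))).
  apply: ler_sum => b _; rewrite ler_wpM2l ?indic_law_ge0 //.
  exact: mulr_indicator_ge_le (WN_ge0 b) s_gt0.
have -> : \sum_(b : {ffun 'I_N -> bool}) indic_law l b * (WN l b ^+ p.+1 / s ^+ p)
    = (s ^+ p * (N%:R * l) ^+ p.+1)^-1 * \sum_(b : {ffun 'I_N -> bool})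
        indic_law l b * (\sum_j ((b j)%:R : R)) ^+ p.+1.
  rewrite mulr_sumr; apply: eq_bigr => b _.
  by rewrite WN_sum_div expr_div_n invfM; ring.
apply: le_trans (ler_wpM2l _ (@binomial_moment_le R N l l_ge0 l_le1 p)) _.
  by rewrite invr_ge0 mulr_ge0 ?exprn_ge0 ?mulr_ge0 // ltW.
rewrite le_eqVlt; apply/orP; left; apply/eqP.
rewrite natrM natrX exprS exprMn.
by field; rewrite ?N_neq0 ?l_neq0 ?s_neq0 ?expf_neq0.
Qed.

End tilde_pi_tail.

Section nonneg_integral.
Context (d : measure_display) (T : measurableType d) (R : realType).
Variable mu : {measure set T -> \bar R}.
Local Open Scope ereal_scope.

(* The integral of a nonnegative function is a supremum over its simple
   minorants, so it is monotone without any measurability assumption. *)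
Lemma ge0_le_integral_nonmeasurable (f1 f2 : T -> \bar R) :
  (forall x, 0 <= f1 x) -> (forall x, f1 x <= f2 x) ->
  \int[mu]_x f1 x <= \int[mu]_x f2 x.
Proof.
move=> f1_ge0 le_f12.
have f2_ge0 x : 0 <= f2 x by exact: le_trans (f1_ge0 x) (le_f12 x).
rewrite (ge0_integralTE mu f1_ge0) (ge0_integralTE mu f2_ge0).
apply: ereal_sup_le => _ [h /= le_hf1 <-]; exists h => //= x.
exact: le_trans (le_hf1 x) (le_f12 x).
Qed.

Lemma ge0_integral_le_lincomb (g u v : T -> R) (a b : R) :
  (0 <= a)%R -> (0 <= b)%R ->
  measurable_fun setT u -> measurable_fun setT v ->
  (forall x, 0 <= u x)%R -> (forall x, 0 <= v x)%R -> (forall x, 0 <= g x)%R ->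
  (forall x, g x <= a * u x + b * v x)%R ->
  \int[mu]_x (g x)%:E <= a%:E * \int[mu]_x (u x)%:E + b%:E * \int[mu]_x (v x)%:E.
Proof.
move=> a_ge0 b_ge0 mu' mv' u_ge0 v_ge0 g_ge0 le_g.
have Eu_ge0 x : setT x -> 0 <= (u x)%:E by rewrite lee_fin.
have Ev_ge0 x : setT x -> 0 <= (v x)%:E by rewrite lee_fin.
have mEu : measurable_fun setT (EFin \o u) by exact/measurable_EFinP.
have mEv : measurable_fun setT (EFin \o v) by exact/measurable_EFinP.
rewrite -(ge0_integralZl_EFin mu measurableT Eu_ge0 mEu a_ge0).
rewrite -(ge0_integralZl_EFin mu measurableT Ev_ge0 mEv b_ge0).
rewrite -ge0_integralD //.
- apply: ge0_le_integral_nonmeasurable => x; first by rewrite lee_fin.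
  by rewrite -!EFinM -EFinD lee_fin.
- by move=> x _; rewrite mule_ge0 ?lee_fin.
- exact: measurable_funeM.
- by move=> x _; rewrite mule_ge0 ?lee_fin.
- exact: measurable_funeM.
Qed.

End nonneg_integral.

Lemma measurable_funVX (d : measure_display) (T : measurableType d) (R : realType)
  (f : T -> R) (n : nat) :
  measurable_fun setT f -> (forall x, 0 < f x) ->
  measurable_fun setT (fun x => f x ^- n).
Proof.
move=> mf f_gt0.
change (measurable_fun setT (GRing.inv \o (fun x => f x ^+ n))).
apply: (@measurable_comp _ _ _ T R R [set` `]0%R, +oo[] GRing.inv setT) => //.
- by move=> _ [x _ <-]; rewrite /= in_itv /= andbT exprn_gt0.
- apply: open_continuous_measurable_fun; first exact: interval_open.
  move=> x; rewrite inE /= in_itv /= andbT => x_gt0.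
  by apply: inv_continuous; rewrite gt_eqF.
exact: measurable_funX.
Qed.

Section ellABC.
Context {R : realType} {d d' : measure_display} {X : measurableType d}.
Context {Y : measurableType d'} (f : R.-pker X ~> Y) {B : set Y}.
Hypothesis mB : measurable B.

Lemma ellABCE (x : X) : f x B = (ellABC f B x)%:E.
Proof.
rewrite /ellABC fineK // ge0_fin_numE ?measure_ge0 //.
apply: (@le_lt_trans _ _ (f x setT)); last by rewrite prob_kernel ltry.
by apply: le_measure; rewrite ?inE.
Qed.

Lemma ellABC_le1 (x : X) : ellABC f B x <= 1.
Proof.
by rewrite -lee_fin -ellABCE -(@prob_kernel _ _ _ _ _ f x); apply: le_measure; rewrite ?inE.
Qed.

Lemma measurable_ellABC : measurable_fun setT (ellABC f B).
Proof. exact: measurableT_comp (measurable_kernel f B mB). Qed.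

End ellABC.

Section pi_integral_tail.
Context {R : realType} {d : measure_display} {X : measurableType d}.
Variables (mu : {measure set X -> \bar R}) (nu ell : X -> R) (p : nat).
Hypotheses (p_gt0 : (0 < p)%N) (mnu : measurable_fun setT nu).
Hypotheses (nu_ge0 : forall x, 0 <= nu x) (nu1 : (\int[mu]_x (nu x)%:E = 1)%E).
Hypotheses (mell : measurable_fun setT ell).
Hypotheses (ell_gt0 : forall x, 0 < ell x) (ell_le1 : forall x, ell x <= 1).
Hypothesis ellVX_fin : (\int[mu]_x (nu x * ell x ^- p.-1)%:E < +oo)%E.

Let Z := normconst mu nu ell.
Let I := fine (\int[mu]_x (nu x * ell x ^- p.-1)%:E)%E.

Let nu_ell_ge0 x : 0 <= nu x * ell x.
Proof. by rewrite mulr_ge0 // ltW. Qed.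

Let nu_ellVX_ge0 x : 0 <= nu x * ell x ^- p.-1.
Proof. by rewrite mulr_ge0 // invr_ge0 exprn_ge0 // ltW. Qed.

Lemma integral_nu_ell : (\int[mu]_x (nu x * ell x)%:E = Z%:E)%E.
Proof.
rewrite /Z /normconst fineK // ge0_fin_numE; last first.
  by apply: integral_ge0 => x _; rewrite lee_fin.
apply: (@le_lt_trans _ _ (\int[mu]_x (nu x)%:E)%E); last by rewrite nu1 ltry.
apply: ge0_le_integral => //.
- by move=> x _; rewrite lee_fin.
- exact/measurable_EFinP/measurable_funM.
- exact/measurable_EFinP.
by move=> x _; rewrite lee_fin ler_piMr.
Qed.

Lemma integral_nu_ellVX : (\int[mu]_x (nu x * ell x ^- p.-1)%:E = I%:E)%E.
Proof.
by rewrite /I fineK // ge0_fin_numE // integral_ge0 // => x _; rewrite lee_fin.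
Qed.

Lemma normconst_ge0 : 0 <= Z.
Proof. by rewrite fine_ge0 // integral_ge0 // => x _; rewrite lee_fin. Qed.

Lemma integral_nu_ellVX_ge0 : 0 <= I.
Proof. by rewrite fine_ge0 // integral_ge0 // => x _; rewrite lee_fin. Qed.

Lemma weighted_tilde_pi_tail_le (N : nat) (s : R) (x : X) : (0 < N)%N -> 0 < s ->
  nu x * ell x / Z * tilde_pi_tail N (ell x) s
  <= s ^- p / Z * (nu x * ell x)
     + s ^- p * 'C(p.+1, 2)%:R / (Z * N%:R) * (nu x * ell x ^- p.-1).
Proof.
move=> N_gt0 s_gt0.
have nu_ell_Z_ge0 : 0 <= nu x * ell x / Z by rewrite divr_ge0 ?normconst_ge0.
have := @tilde_pi_tail_le R N (ell x) (ell_gt0 x) (ell_le1 x) p s N_gt0 s_gt0.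
move/(ler_wpM2l nu_ell_Z_ge0)/le_trans; apply; rewrite le_eqVlt; apply/orP; left.
have N_neq0 : N%:R != 0 :> R by rewrite pnatr_eq0 -lt0n.
have ell_neq0 : ell x != 0 by rewrite gt_eqF.
(* Z is not known to be nonzero here, so Z^-1 is kept as an atom for field. *)
rewrite -(prednK p_gt0) (exprS (ell x)) (invfM Z).
have : ell x ^+ p.-1 != 0 by rewrite expf_neq0.
set Zi := Z^-1; set sp := s ^- _; set L := ell x ^+ p.-1 => L_neq0.
by apply/eqP; field; rewrite ?N_neq0 ?ell_neq0 ?L_neq0.
Qed.

Lemma pi_integral_tilde_pi_tail_le (N : nat) (s : R) : (0 < N)%N -> 0 < s ->
  (pi_integral mu nu ell (fun x => tilde_pi_tail N (ell x) s)
   <= ((1 + 'C(p.+1, 2)%:R * I / (Z * N%:R)) * s ^- p)%:E)%E.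
Proof.
move=> N_gt0 s_gt0; set c : R := 'C(p.+1, 2)%:R.
have sp_ge0 : 0 <= s ^- p by rewrite invr_ge0 exprn_ge0 // ltW.
have Z_ge0 := normconst_ge0.
have weight_ge0 x : 0 <= nu x * ell x / Z * tilde_pi_tail N (ell x) s.
  by rewrite mulr_ge0 ?divr_ge0 ?tilde_pi_tail_ge0.
have a_ge0 : 0 <= s ^- p / Z by rewrite divr_ge0.
have b_ge0 : 0 <= s ^- p * c / (Z * N%:R) by rewrite !divr_ge0 ?mulr_ge0.
have m_nu_ell : measurable_fun setT (fun x => nu x * ell x).
  exact: measurable_funM.
have m_nu_ellVX : measurable_fun setT (fun x => nu x * ell x ^- p.-1).
  exact/measurable_funM/measurable_funVX.
rewrite /pi_integral; apply: le_trans (@ge0_integral_le_lincomb _ _ _ mu _ _ _ _ _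
  a_ge0 b_ge0 m_nu_ell m_nu_ellVX nu_ell_ge0 nu_ellVX_ge0 weight_ge0
  (fun x => weighted_tilde_pi_tail_le N s x N_gt0 s_gt0)) _.
rewrite integral_nu_ell integral_nu_ellVX -!EFinM -EFinD lee_fin mulrDl mul1r.
apply: lerD; last by rewrite -/c le_eqVlt; apply/orP; left; apply/eqP; ring.
have [->|Z_neq0] := eqVneq Z 0; first by rewrite mulr0.
by rewrite divfK.
Qed.

End pi_integral_tail.

Theorem proposition48 (R : realType) (d d' : measure_display)
  (X : measurableType d) (mu : {measure set X -> \bar R})
  (Y : measurableType d') (f : R.-pker X ~> Y) (B : set Y)
  (nu : X -> R) (p : nat) :
  (0 < p)%N ->
  measurable B ->
  measurable_fun setT nu ->
  (forall x, 0 <= nu x) ->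
  (\int[mu]_x (nu x)%:E = 1)%E ->
  (forall x, 0 < ellABC f B x) ->
  (\int[mu]_x (nu x * (ellABC f B x) ^- p.-1)%:E < +oo)%E ->
  (* "in particular, the hypothesis holds for p = 1" *)
  (\int[mu]_x (nu x * (ellABC f B x) ^- (1%N.-1))%:E < +oo)%E /\
  exists C : nat -> R,
    (forall N, (0 < N)%N -> 0 < C N) /\
    (forall N (s : R), (0 < N)%N -> 0 < s ->
       (pi_integral mu nu (ellABC f B)
          (fun x => tilde_pi_tail N (ellABC f B x) s)
        <= (C N * s ^- p)%:E)%E) /\
    (exists K : R, \forall N \near \oo%classic, `|C N - 1| <= K / N%:R).
Proof.
move=> p_gt0 mB mnu nu_ge0 nu1 ell_gt0 ellVX_fin; split.
  by under eq_integral do rewrite expr0 invr1 mulr1; rewrite nu1 ltry.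
have ell_le1 := ellABC_le1 f mB; have mell := measurable_ellABC f mB.
set Z := normconst mu nu (ellABC f B).
set I := fine (\int[mu]_x (nu x * ellABC f B x ^- p.-1)%:E)%E.
have I_ge0 : 0 <= I by apply: integral_nu_ellVX_ge0.
have Z_ge0 : 0 <= Z by apply: normconst_ge0.
have K_ge0 : 0 <= 'C(p.+1, 2)%:R * I / Z by rewrite !mulr_ge0 ?invr_ge0.
exists (fun N => 1 + 'C(p.+1, 2)%:R * I / (Z * N%:R)); split; [|split].
- move=> N _; rewrite ltr_pwDl // invfM mulrA mulr_ge0 //.
- by move=> N s N_gt0 s_gt0; apply: pi_integral_tilde_pi_tail_le.
- exists ('C(p.+1, 2)%:R * I / Z); apply: nearW => N.
  by rewrite [1 + _]addrC addrK invfM mulrA ger0_norm // mulr_ge0 // invr_ge0.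
Qed.
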